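(* Let $q=p^h$ with $p>3$ prime, let $X,T$ be positive integers, and let $\mathcal{E}$ be an elliptic curve over $\mathbb{F}_q$ with affine equation $y^2=f(x)$, $\deg f=3$; let $\gamma=\#\{z\in\mathbb{F}_q: f(z)=0\}$. Define $$\mathcal{R}^{\mathcal{X}}_{\max}=\frac{L^{\mathcal{X}}}{L^{\mathcal{X}}+X+T},\quad L^{\mathcal{X}}=\left\lfloor\frac{q-(X+T)}{2}\right\rfloor,$$ $$\mathcal{R}^{\mathcal{E}}_{\max}=\frac{L^{\mathcal{E}}}{L^{\mathcal{E}}+X+T+8},\quad L^{\mathcal{E}}=2\left\lfloor\frac{\#\mathcal{E}(\mathbb{F}_q)-(X+T+\gamma+9)}{4}\right\rfloor-1.$$ If $\#\mathcal{E}(\mathbb{F}_q)\ge q\left(1+\frac{8}{X+T}\right)+\gamma+7$, then $\mathcal{R}^{\mathcal{E}}_{\max}>\mathcal{R}^{\mathcal{X}}_{\max}$.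
   Context: $\mathcal{R}^{\mathcal{X}}_{\max}$ is the largest rate of the known XSTPIR construction from rational curves over $\mathbb{F}_q$ (which gives, whenever $2L+X+T\le q$, an $X$-secure $T$-private PIR scheme with $N=L+X+T$ servers and rate $L/N$), and $\mathcal{R}^{\mathcal{E}}_{\max}$ is the largest rate of the known construction from the elliptic curve $\mathcal{E}$ (rate $L/N$, $N=L+X+T+8$, $L$ odd, requiring $\#\mathcal{E}(\mathbb{F}_q)\ge 2L+X+T+11+\gamma$); the explicit formulas above are these maxima. *)

From HB Require Import structures.
From mathcomp Require Import all_boot all_order all_algebra all_field.
Set Implicit Arguments. Unset Strict Implicit. Unset Printing Implicit Defensive.
Import Order.TTheory GRing.Theory Num.Theory.
Local Open Scope ring_scope.

(* Affine model y^2 = f(x) of an elliptic curve over a finite field F: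
   f is a cubic (size 4) without repeated roots (separable). *)
Definition elliptic_cubic (F : finFieldType) (f : {poly F}) : Prop :=
  size f = 4%N /\ separable_poly f.

(* #E(F_q): affine points plus the single point at infinity. *)
Definition ell_card (F : finFieldType) (f : {poly F}) : nat :=
  (#|[set P : F * F | P.2 ^+ 2 == f.[P.1]]|).+1.

Definition gamma_roots (F : finFieldType) (f : {poly F}) : nat :=
  #|[set z : F | root f z]|.

(* L^X = floor((q - (X+T))/2)  (intdiv %/ with positive divisor is floor) *)
Definition LX (q X T : nat) : int := ((q%:Z - (X + T)%:Z) %/ 2)%Z.

Definition LE (N X T g : nat) : int :=
  2 * ((N%:Z - (X + T + g + 9)%:Z) %/ 4)%Z - 1.

Definition RX (q X T : nat) : rat :=
  (LX q X T)%:~R / ((LX q X T)%:~R + (X + T)%:R).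

Definition RE (N X T g : nat) : rat :=
  (LE N X T g)%:~R / ((LE N X T g)%:~R + (X + T + 8)%:R).

(* Both rates have the form L / (L + D), and for positive denominators
   L / (L + D) < L' / (L' + D') iff L D' < L' D.  With s = X + T, the floors give
   2 L^X <= q - s and, combined with the hypothesis on #E, q (1 + 8/s) <= 2 L^E + s + 7.
   Hence 2 L^X (s + 8) <= (q - s)(s + 8) <= 2 L^E s - s < 2 L^E s. *)
From HB Require Import structures.
From mathcomp Require Import all_boot all_order all_algebra all_field.
From mathcomp Require Import zify ring lra.
Import Order.TTheory GRing.Theory Num.Theory.
Local Open Scope ring_scope.

Lemma ltr_rate (R : numFieldType) (a b c d : R) :
  0 < a + b -> 0 < c + d -> (a / (a + b) < c / (c + d)) = (a * d < c * b).
Proof.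
move=> ab_gt0 cd_gt0.
rewrite ltr_pdivrMr // mulrAC ltr_pdivlMr // !mulrDr [c * a]mulrC.
by rewrite ltrD2l [a * d]mulrC.
Qed.

Lemma rate_lt (R : realFieldType) (q s j l : R) :
  0 <= q -> 1 < s -> 2 * j <= q - s <= 2 * j + 1 ->
  q * (1 + 8 / s) <= 2 * l + s + 7 ->
  j / (j + s) < l / (l + (s + 8)).
Proof.
move=> q_ge0 s_gt1 /andP[j_le j_ge] hl.
have s_gt0 : 0 < s by lra.
have q8 : 0 <= q * (8 / s) by rewrite mulr_ge0 // divr_ge0 // ltW.
rewrite mulrDr mulr1 in hl.
have js_gt0 : 0 < j + s by lra.
have ls_gt0 : 0 < l + (s + 8) by lra.
rewrite ltr_rate //.
have hls : q * s + 8 * q <= (2 * l + s + 7) * s.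
  have -> : q * s + 8 * q = (q + q * (8 / s)) * s by field; rewrite gt_eqF.
  by rewrite ler_pM2r.
have hjs : 2 * j * (s + 8) <= (q - s) * (s + 8) by rewrite ler_pM2r //; lra.
lra.
Qed.

Lemma LX_bounds (R : realDomainType) (q X T : nat) :
  2 * (LX q X T)%:~R <= (q%:R - (X + T)%:R : R) <= 2 * (LX q X T)%:~R + 1.
Proof.
rewrite /LX; set m := q%:Z - (X + T)%:Z.
have -> : q%:R - (X + T)%:R = m%:~R :> R by rewrite intrB.
clearbody m.
have lo := lez_floor m (isT : 2%:Z != 0).
have hi : m <= (m %/ 2)%Z * 2 + 1 by have := ltz_ceil m (isT : 0 < 2%:Z); lia.
rewrite -(ler_int R) intrM in lo; rewrite -(ler_int R) intrD intrM in hi.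
lra.
Qed.

Lemma LE_lower_bound (R : realDomainType) (N X T g : nat) :
  N%:R - (X + T)%:R - g%:R - 9 <= 2 * (LE N X T g)%:~R + 5 :> R.
Proof.
rewrite /LE; set m := N%:Z - (X + T + g + 9)%:Z.
have -> : N%:R - (X + T)%:R - g%:R - 9 = m%:~R :> R.
  by rewrite intrB -!addrA -!opprD -!natrD !addnA.
clearbody m.
have hi : m <= (m %/ 4)%Z * 4 + 3 by have := ltz_ceil m (isT : 0 < 4%:Z); lia.
rewrite -(ler_int R) intrD intrM in hi.
rewrite intrD intrM; lra.
Qed.

Theorem proposition4p2 (F : finFieldType) (p : nat) (f : {poly F}) (X T : nat) :
  prime p -> (3 < p)%N -> p \in [pchar F] ->
  (0 < X)%N -> (0 < T)%N ->
  elliptic_cubic f ->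
  (ell_card f)%:R >= (#|F|)%:R * (1 + 8%:R / (X + T)%:R) + (gamma_roots f)%:R + 7%:R
    :> rat ->
  RE (ell_card f) X T (gamma_roots f) > RX #|F| X T.
Proof.
move=> _ _ _ X_gt0 T_gt0 _ hN.
rewrite /RE /RX (natrD _ (X + T) 8).
apply: (@rate_lt _ #|F|%:R); first exact: ler0n.
- by rewrite ltr1n; lia.
- exact: LX_bounds.
- have := LE_lower_bound rat (ell_card f) X T (gamma_roots f); lra.
Qed.
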